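(* Consider the remote-attestation Stackelberg game described in the context with a single device $\delta$ (so $\mathcal{D}=\{\delta\}$ and the only class is $\mathcal{E}=\{\delta\}$) and a single attestation method $m$. Let $$\tau_\delta=\frac{1}{\mu^m}\cdot\frac{C_A^{\mathcal{E}}+C_A^\delta-G_A^\delta}{L_A^\delta-G_A^\delta}.$$ Then the defender's optimal attestation strategy ${p^*}_\delta^m$ is $${p^*}_\delta^m=\begin{cases}0&\text{if } C_D^m\ge (G_D^\delta-L_D^\delta)\cdot\mu^m \text{ and } \tau_\delta\ge \frac{L_D^\delta}{-C_D^m},\\ \tau_\delta&\text{otherwise.}\end{cases}$$
   Context: Remote-attestation game: there is a finite set $\mathcal{D}$ of devices partitioned into pairwise disjoint device classes, and a finite set $\mathcal{M}$ of attestation methods. Constants: for each method $m$, a detection probability $\mu^m$ and a defender cost $C_D^m$ of running $m$ on a device; for each device $\delta$, an attacker cost $C_A^\delta$ of attacking it; for each class $\mathcal{E}$, an attacker exploit-development cost $C_A^{\mathcal{E}}$; for each device $\delta$, defender gain $G_D^\delta$ and loss $L_D^\delta$, attacker gain $G_A^\delta$ and loss $L_A^\delta$ (losses are negative values), with $G_D^\delta=-L_A^\delta$ and $L_D^\delta=-G_A^\delta$. The defender (leader) chooses $\vec p=\langle p_\delta^m\rangle\in[0,1]^{|\mathcal{D}\times\mathcal{M}|}$ ($p_\delta^m$ = probability of running $m$ on $\delta$); the attacker (follower) chooses $\vec a\in\{0,1\}^{|\mathcal{D}|}$. $P_\delta(\vec p)=1-\prod_{m}(1-\mu^m p_\delta^m)$;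 $C_D^T(\vec p)=\sum_\delta\sum_m C_D^m p_\delta^m$; $U_D(\vec p,\vec a)=\sum_\delta[G_D^\delta P_\delta(\vec p)+L_D^\delta(1-P_\delta(\vec p))]a_\delta-C_D^T(\vec p)$; $C_A^T(\vec a)=\sum_{\mathcal{E}}\big(C_A^{\mathcal{E}}1_{\{\exists\delta\in\mathcal{E}:a_\delta=1\}}+\sum_{\delta\in\mathcal{E}}C_A^\delta a_\delta\big)$; $U_A(\vec p,\vec a)=\sum_\delta[L_A^\delta P_\delta(\vec p)+G_A^\delta(1-P_\delta(\vec p))]a_\delta-C_A^T(\vec a)$. Attacker best response: $\mathcal{F}_A(\vec p)=\operatorname{argmax}_{\vec a}U_A(\vec p,\vec a)$. The defender's optimal strategy is $\vec p^*=\operatorname{argmax}_{\vec p,\ \vec a\in\mathcal{F}_A(\vec p)}U_D(\vec p,\vec a)$ (i.e., ties in the attacker's best response are broken in favor of the defender). *)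

From mathcomp Require Import all_boot all_order all_algebra.
Set Implicit Arguments. Unset Strict Implicit. Unset Printing Implicit Defensive.
Import Order.TTheory GRing.Theory Num.Theory.
Local Open Scope ring_scope.

Section Game.
Variables (R : realFieldType) (D M K : finType).
(* cls d = the device class of d (classes are the fibres of cls, hence a partition) *)
Variable cls : D -> K.
Variables (mu CD : M -> R) (CAd : D -> R) (CAE : K -> R).
Variables (GD LD GA LA : D -> R).

Definition Pdet (p : D -> M -> R) (d : D) : R :=
  1 - \prod_(m : M) (1 - mu m * p d m).

Definition CDT (p : D -> M -> R) : R := \sum_(d : D) \sum_(m : M) CD m * p d m.

Definition UD (p : D -> M -> R) (a : D -> bool) : R :=
  \sum_(d : D) (GD d * Pdet p d + LD d * (1 - Pdet p d)) * (a d)%:R - CDT p.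

Definition CAT (a : D -> bool) : R :=
  \sum_(E : K) (CAE E * ([exists d, (cls d == E) && a d] : nat)%:R
                + \sum_(d | cls d == E) CAd d * (a d)%:R).

Definition UA (p : D -> M -> R) (a : D -> bool) : R :=
  \sum_(d : D) (LA d * Pdet p d + GA d * (1 - Pdet p d)) * (a d)%:R - CAT a.

Definition best_response (p : D -> M -> R) (a : D -> bool) : Prop :=
  forall a' : D -> bool, UA p a' <= UA p a.

Definition valid_strategy (p : D -> M -> R) : Prop :=
  forall d m, 0 <= p d m <= 1.

(* p is in argmax_{p', a' in F_A(p')} U_D(p', a') (ties broken for the defender) *)
Definition optimal_defender (p : D -> M -> R) : Prop :=
  valid_strategy p /\
  exists a, best_response p a /\
    forall p' a', valid_strategy p' -> best_response p' a' -> UD p' a' <= UD p a.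

End Game.

(* With one device and one method the attacker's net gain from attacking is
   mu (L_A - G_A) (p - tau), so attacking is a best response exactly when
   p <= tau.  The defender thus either tolerates the attack, earning
   L_D + p (k - C_D) with k = (G_D - L_D) mu for p in [0, tau], or deters it,
   earning - C_D p for p >= tau.  Deterrence is best at p = tau; toleration at
   p = 0 if k <= C_D and at p = tau otherwise, and comparing L_D with
   - C_D tau yields the two cases. *)
From mathcomp Require Import all_boot all_order all_algebra.
From mathcomp Require Import ring lra.
Set Implicit Arguments. Unset Strict Implicit. Unset Printing Implicit Defensive.
Import Order.TTheory GRing.Theory Num.Theory.
Local Open Scope ring_scope.

Lemma big_single_index (T : Type) (idx : T) (op : Monoid.law idx) (I : finType)
    (i0 : I) (F : I -> T) : (forall i, i = i0) -> \big[op/idx]_i F i = F i0.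
Proof. by move=> single_i0; apply: big_pred1 => i /=; rewrite [i]single_i0 eqxx. Qed.

Lemma max_bool_scaled (R : numDomainType) (s : R) (b : bool) :
  (forall b' : bool, s * b'%:R <= s * b%:R) <-> (if b then 0 <= s else s <= 0).
Proof.
split=> [max_b | s_sign b'].
  by case: b max_b => max_b; [have := max_b false | have := max_b true];
    rewrite ?mulr1 ?mulr0.
by case: b b' s_sign => [] [] /=; rewrite ?mulr1 ?mulr0.
Qed.

Section ThresholdGame.
Variables (R : realFieldType) (L c k tau : R).

Definition threshold_response (x : R) (b : bool) : bool :=
  if b then x <= tau else tau <= x.

Definition leader_payoff (x : R) (b : bool) : R := (L + x * k) * b%:R - c * x.

Hypotheses (c_gt0 : 0 < c) (tau_ge0 : 0 <= tau).

Lemma leader_payoff_deterred x : tau <= x -> leader_payoff x false <= - c * tau.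
Proof. by move=> tau_le_x; rewrite /leader_payoff mulr0 add0r mulNr lerN2 ler_pM2l. Qed.

Lemma leader_payoff_attacked x : leader_payoff x true = L + x * (k - c).
Proof. by rewrite /leader_payoff mulr1; ring. Qed.

Lemma leader_payoff_at_threshold (b := 0 <= L + tau * k) :
  - c * tau <= leader_payoff tau b /\ L + tau * (k - c) <= leader_payoff tau b.
Proof.
rewrite /b /leader_payoff.
by case: (lerP 0 (L + tau * k)) => L_tau_sign; rewrite ?mulr1 ?mulr0; split; lra.
Qed.

Definition leader_optimum : R := if (k <= c) && (L / - c <= tau) then 0 else tau.

Lemma leader_optimumP :
  exists b, threshold_response leader_optimum b /\
    forall x b', 0 <= x -> threshold_response x b' ->
      leader_payoff x b' <= leader_payoff leader_optimum b.
Proof.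
rewrite /threshold_response /leader_optimum.
have Nc_lt0 : - c < 0 by rewrite oppr_lt0.
case: ifP => [/andP[k_le_c] | /negbT].
  rewrite ler_ndivrMr // mulrN => cTau_ge_L.
  exists true; split=> [// | x [] x_ge0 x_tau].
    have : 0 <= x * (c - k) by apply: mulr_ge0; lra.
    by rewrite !leader_payoff_attacked; lra.
  by have := leader_payoff_deterred x_tau; rewrite leader_payoff_attacked; lra.
rewrite negb_and -!ltNge ltr_ndivlMr // mulrN => not_deterrable.
have [deter_le attack_le] := leader_payoff_at_threshold.
exists (0 <= L + tau * k); split; first by case: ifP.
move=> x [] x_ge0 x_tau; last exact: le_trans (leader_payoff_deterred x_tau) _.
rewrite leader_payoff_attacked.
case: (lerP k c) not_deterrable => [k_le_c | c_lt_k _].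
  move=> /= L_lt_cTau.
  have : 0 <= x * (c - k) by apply: mulr_ge0; lra.
  lra.
apply: le_trans attack_le; rewrite lerD2l ler_wpM2r //; lra.
Qed.

End ThresholdGame.

Section SingleDevice.
Variables (R : realFieldType) (D M K : finType) (cls : D -> K).
Variables (mu CD : M -> R) (CAd : D -> R) (CAE : K -> R) (GD LD GA LA : D -> R).
Variables (dl : D) (m : M).
Hypotheses (hD : forall d : D, d = dl) (hM : forall m' : M, m' = m)
           (hK : forall E : K, E = cls dl).

Lemma Pdet_single p : Pdet mu p dl = mu m * p dl m.
Proof. by rewrite /Pdet (big_single_index _ _ hM); ring. Qed.

Lemma CAT_single a : CAT cls CAd CAE a = (CAE (cls dl) + CAd dl) * (a dl)%:R.
Proof.
have attacked_class : [exists d, (cls d == cls dl) && a d] = a dl.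
  apply/existsP/idP => [[d /andP[_]] | a_dl]; first by rewrite [d]hD.
  by exists dl; rewrite eqxx.
rewrite /CAT (big_single_index _ _ hK) big_mkcond (big_single_index _ _ hD).
by rewrite eqxx attacked_class mulrDl.
Qed.

Lemma UD_single p a : UD mu CD GD LD p a =
  leader_payoff (LD dl) (CD m) ((GD dl - LD dl) * mu m) (p dl m) (a dl).
Proof.
rewrite /UD /CDT !(big_single_index _ _ hD) (big_single_index _ _ hM).
by rewrite Pdet_single /leader_payoff; ring.
Qed.

Definition attack_threshold : R :=
  (mu m)^-1 * ((CAE (cls dl) + CAd dl - GA dl) / (LA dl - GA dl)).

Hypotheses (mu_gt0 : 0 < mu m) (LA_lt_GA : LA dl < GA dl).

Lemma UA_single p a : UA cls mu CAd CAE GA LA p a =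
  mu m * (LA dl - GA dl) * (p dl m - attack_threshold) * (a dl)%:R.
Proof.
have LG_lt0 : LA dl - GA dl < 0 by rewrite subr_lt0.
rewrite /UA (big_single_index _ _ hD) CAT_single Pdet_single /attack_threshold.
by field; rewrite (lt_eqF LG_lt0) (gt_eqF mu_gt0).
Qed.

Lemma best_response_single p a :
  best_response cls mu CAd CAE GA LA p a <->
  threshold_response attack_threshold (p dl m) (a dl).
Proof.
set s := mu m * (LA dl - GA dl) * (p dl m - attack_threshold).
have s_scale_lt0 : mu m * (LA dl - GA dl) < 0 by rewrite pmulr_rlt0 // subr_lt0.
apply: (@iff_trans _ (forall b : bool, s * b%:R <= s * (a dl)%:R)).
  rewrite /best_response; setoid_rewrite UA_single.
  by split=> [max_a b | max_a a']; [exact: max_a (fun _ => b) | exact: max_a].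
apply: iff_trans (max_bool_scaled _ _) _; rewrite /threshold_response /s.
by case: (a dl); rewrite ?nmulr_rge0 ?nmulr_rle0 ?subr_le0 ?subr_ge0.
Qed.
End SingleDevice.

Theorem proposition1 (R : realFieldType) (D M K : finType) (cls : D -> K)
    (mu CD : M -> R) (CAd : D -> R) (CAE : K -> R) (GD LD GA LA : D -> R)
    (dl : D) (m : M)
    (hD : forall d : D, d = dl) (hM : forall m' : M, m' = m)
    (hK : forall E : K, E = cls dl)
    (hmu : 0 < mu m <= 1) (hCD : 0 < CD m)
    (hCAd : 0 <= CAd dl) (hCAE : 0 <= CAE (cls dl))
    (hLA : LA dl < 0) (hGA : 0 < GA dl)
    (hGD : GD dl = - LA dl) (hLD : LD dl = - GA dl)
    (htau : let tau := (mu m)^-1 * ((CAE (cls dl) + CAd dl - GA dl) / (LA dl - GA dl)) in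
            0 <= tau <= 1) :
  let tau := (mu m)^-1 * ((CAE (cls dl) + CAd dl - GA dl) / (LA dl - GA dl)) in
  let pstar : R :=
    if (CD m >= (GD dl - LD dl) * mu m) && (tau >= LD dl / (- CD m)) then 0 else tau in
  optimal_defender cls mu CD CAd CAE GD LD GA LA (fun _ _ => pstar).
Proof.
move=> tau pstar.
have /andP[tau_ge0 tau_le1] := htau.
have LA_lt_GA : LA dl < GA dl := lt_trans hLA hGA.
have mu_gt0 : 0 < mu m by case/andP: hmu.
have best_responseE := best_response_single CAd CAE hD hM hK mu_gt0 LA_lt_GA.
have [b [b_best b_opt]] := leader_optimumP (LD dl) ((GD dl - LD dl) * mu m) hCD tau_ge0.
split=> [_ _ | ].
  by rewrite /pstar; case: ifP => _; rewrite ?lexx ?ler01 ?tau_ge0 ?tau_le1.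
exists (fun _ => b); split; first exact/best_responseE.
move=> p a /(_ dl m)/andP[p_ge0 _] /best_responseE a_best.
by rewrite !(UD_single _ _ _ _ hD hM); apply: b_opt.
Qed.
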